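(* Let $T\subset\mathbb{Z}_p$ be a finite set with at least two elements, let $\mu_T=\sum_{t\in T}\delta_t$, and let $\gamma_T=\max_{t,t'\in T,\,t\neq t'}\{-\log_p|t-t'|_p\}$. Then $\widehat{\mu_T}(\xi)\neq 0$ for every $\xi\in\mathbb{Q}_p$ with $\xi\notin B(0,p^{\gamma_T+1})$, i.e. with $|\xi|_p>p^{\gamma_T+1}$.
   Context: $\mathbb{Q}_p$ is the field of $p$-adic numbers ($p$ prime) with absolute value $|\cdot|_p$ and $\mathbb{Z}_p$ its ring of integers; $B(0,p^n)=p^{-n}\mathbb{Z}_p=\{x:|x|_p\le p^n\}$. $\delta_t$ is the Dirac measure at $t$. For $x=\sum_{n\ge v}a_np^n$ ($a_n\in\{0,\dots,p-1\}$) its fractional part is $\{x\}=\sum_{n=v}^{-1}a_np^n$; $\chi(x)=e^{2\pi i\{x\}}$, $\chi_y(x)=\chi(yx)$. The Fourier transform of a finite Borel measure $\mu$ is $\widehat\mu(y)=\int\overline{\chi_y(x)}\,d\mu(x)$, so $\widehat{\mu_T}(\xi)=\sum_{t\in T}e^{-2\pi i\{t\xi\}}$. *)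

From HB Require Import structures.
From mathcomp Require Import all_boot all_order all_algebra.
From mathcomp Require Import all_classical all_reals.
From mathcomp Require Import exp trigo.
From mathcomp Require Import complex.
Set Implicit Arguments. Unset Strict Implicit. Unset Printing Implicit Defensive.
Import Order.TTheory GRing.Theory Num.Theory.

(** ** The ring Z_p as the inverse limit  lim Z/p^n Z.
    An element x is given by the sequence of its residues x n = x mod p^n,
    with 0 <= x n < p^n and x (n+1) = x n (mod p^n). *)
Record Zp_adic (p : nat) := MkZp {
  zres :> nat -> nat;
  zres_lt : forall n, zres n < p ^ n;
  zres_coh : forall n, zres n.+1 %% p ^ n = zres n }.

Lemma Zp_pexp_gt0 p (x : Zp_adic p) n : 0 < p ^ n.
Proof. exact: leq_ltn_trans (zres_lt x n). Qed.

Lemma subcoh_aux (a b d D : nat) : 0 < d -> d %| D -> b <= D ->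
  (a + (D - b)) %% d = (a %% d + (d - b %% d)) %% d.
Proof.
move=> d0 /dvdnP[k ->] bD.
apply/eqP; rewrite -(eqn_modDr b) -addnA subnK //.
rewrite -addnA.
have H : (d - b %% d + b) %% d = 0.
  by rewrite -modnDmr subnK ?modnn // ltnW // ltn_mod.
rewrite -[X in _ == X]modnDm H addn0 modn_mod.
by rewrite modn_mod addnC modnMDl.
Qed.

Section Zp_ops.
Variable p : nat.

Lemma zmul_lt (x y : Zp_adic p) n : (x n * y n) %% p ^ n < p ^ n.
Proof. by rewrite ltn_mod (Zp_pexp_gt0 x). Qed.

Lemma zmul_coh (x y : Zp_adic p) n :
  (x n.+1 * y n.+1) %% p ^ n.+1 %% p ^ n = (x n * y n) %% p ^ n.
Proof.
rewrite expnS modn_dvdm ?dvdn_mull //.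
by rewrite -modnMm (zres_coh x) (zres_coh y).
Qed.

Lemma zsub_lt (x y : Zp_adic p) n : (x n + (p ^ n - y n)) %% p ^ n < p ^ n.
Proof. by rewrite ltn_mod (Zp_pexp_gt0 x). Qed.

Lemma zsub_coh (x y : Zp_adic p) n :
  (x n.+1 + (p ^ n.+1 - y n.+1)) %% p ^ n.+1 %% p ^ n
  = (x n + (p ^ n - y n)) %% p ^ n.
Proof.
have Hd : p ^ n %| p ^ n.+1 by rewrite expnS dvdn_mull.
rewrite modn_dvdm // subcoh_aux ?(Zp_pexp_gt0 x) ?(ltnW (zres_lt y _)) //.
by rewrite (zres_coh x) (zres_coh y).
Qed.

Definition zmul (x y : Zp_adic p) : Zp_adic p := MkZp (@zmul_lt x y) (@zmul_coh x y).
Definition zsub (x y : Zp_adic p) : Zp_adic p := MkZp (@zsub_lt x y) (@zsub_coh x y).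

Definition zis0 (x : Zp_adic p) : Prop := forall n, x n = 0.

(** p-adic valuation v(x) of x in Z_p, x <> 0: the least n with
    x (n+1) <> 0, i.e. x = 0 mod p^n but x <> 0 mod p^(n+1).
    Then |x|_p = p^(-v(x)) and -log_p |x|_p = v(x).
    (Junk value 0 for x = 0; it is never used on 0 below.) *)
Definition zval (x : Zp_adic p) : nat :=
  match pselect (exists n, (fun m => x m.+1 != 0) n) with
  | left H => ex_minn H
  | right _ => 0
  end.

Local Open Scope ring_scope.

(** ** Q_p = Z_p[1/p]: every element of Q_p has the form p^(-k) * u with
    k : nat and u in Z_p. An element of Qp_adic p is such a pair (k, u),
    standing for p^(-k) u. *)
Record Qp_adic := MkQp { qexp : nat; qint : Zp_adic p }.

Definition qabs (R : realType) (xi : Qp_adic) : R :=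
  if `[< zis0 (qint xi) >] then 0
  else (p%:R : R) ^ ((qexp xi)%:Z - (zval (qint xi))%:Z).

Definition zqmul (t : Zp_adic p) (xi : Qp_adic) : Qp_adic := MkQp (qexp xi) (zmul t (qint xi)).

(** the fractional part {xi} of xi = p^(-k) u, i.e. (u mod p^k) / p^k *)
Definition qfrac (R : realType) (xi : Qp_adic) : R :=
  ((qint xi) (qexp xi))%:R / (p ^ qexp xi)%:R.

End Zp_ops.

Definition expi (R : realType) (x : R) : R[i] := (cos x +i* sin x)%C.

Local Open Scope ring_scope.

Definition muT_hat (R : realType) (p m : nat) (t : 'I_m -> Zp_adic p) (xi : Qp_adic p)
  : R[i] :=
  \sum_(i < m) expi (- (2 * pi * qfrac R (zqmul (t i) xi))).

(** gamma_T = max_{t <> t'} (-log_p |t - t'|_p) = max_{t <> t'} v(t - t'). *)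
Definition gammaT (p m : nat) (t : 'I_m -> Zp_adic p) : nat :=
  (\max_(i < m) \max_(j < m | i != j) zval (zsub (t i) (t j)))%N.

From mathcomp Require Import all_boot all_order all_algebra.
From mathcomp Require Import all_classical all_reals.
From mathcomp Require Import exp trigo.
From mathcomp Require Import complex.
From mathcomp Require Import all_field zify ring lra.
Set Implicit Arguments. Unset Strict Implicit. Unset Printing Implicit Defensive.
Import Order.TTheory GRing.Theory Num.Theory.
Local Open Scope ring_scope.

(* Write xi = p^-k u with v = v_p(u).  Then hat mu_T(xi) = sum_t z^(c_t), where
   z = e^(-2 pi i / p^k) is a primitive p^k-th root of unity and c_t = t u mod p^k.
   The hypothesis |xi|_p > p^(gamma_T + 1) means k - v >= gamma_T + 2, so
   v_p((t - t') u) < k - 1 and the exponents c_t are pairwise distinct modulo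
   p^(k-1).  The p^k-th cyclotomic polynomial sum_(j<p) X^(j p^(k-1)) is
   irreducible over Q, so a vanishing sum would make it divide sum_t X^(c_t);
   but a multiple of it of degree < p^k has coefficients periodic of period
   p^(k-1), which distinct residues modulo p^(k-1) rule out. *)

(* The p^(n+1)-th cyclotomic polynomial. *)
Definition Phi_pp (p n : nat) : {poly rat} := \sum_(j < p) 'X^(j * p ^ n).

Lemma horner_Phi_pp (F : numFieldType) (p n : nat) (z : F) :
  (map_poly ratr (Phi_pp p n)).[z] = \sum_(j < p) (z ^+ (p ^ n)%N) ^+ j.
Proof.
rewrite /Phi_pp rmorph_sum horner_sum; apply: eq_bigr => j _.
by rewrite rmorphXn /= map_polyX hornerXn mulnC exprM.
Qed.

Lemma root_Phi_pp (F : numFieldType) (p n : nat) (z : F) :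
  z ^+ (p ^ n)%N != 1 -> (z ^+ (p ^ n)%N) ^+ p = 1 ->
  root (map_poly ratr (Phi_pp p n)) z.
Proof.
move=> w_neq1 wp1; rewrite /root horner_Phi_pp.
have /eqP := subrX1 (z ^+ (p ^ n)%N) p; rewrite wp1 subrr eq_sym mulf_eq0 subr_eq0.
by rewrite (negbTE w_neq1).
Qed.

Lemma size_Phi_pp (p n : nat) : (0 < p)%N -> size (Phi_pp p n) = (p.-1 * p ^ n).+1.
Proof.
case: p => [//|p] _; rewrite /Phi_pp big_ord_recr /= addrC size_polyDl ?size_polyXn //.
apply: leq_ltn_trans (size_sum _ _ _) _; apply/bigmax_leqP => j _.
by rewrite size_polyXn ltn_mul2r expn_gt0 ltn_ord.
Qed.

Lemma min_root_irredp (K : fieldType) (L : idomainType) (f : {rmorphism K -> L})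
    (x : L) (q : {poly K}) :
  (1 < size q)%N -> (forall r, root (map_poly f r) x = (q %| r)) ->
  irreducible_poly q.
Proof.
move=> q_gt1 minq; split=> // d d_neq1 dv_dq.
have q_neq0 : q != 0 by rewrite -size_poly_gt0 ltnW.
have /dvdpP[e def_q] := dv_dq.
have := minq q; rewrite dvdpp def_q rmorphM rootM !minq -def_q.
case/orP=> [dv_qe | dv_qd]; last by rewrite /eqp dv_dq.
have /andP[e_neq0 d_neq0] : (e != 0) && (d != 0).
  by rewrite -negb_or -mulf_eq0 -def_q.
have := dvdp_leq e_neq0 dv_qe; rewrite def_q size_mul //.
move: d_neq1 d_neq0; rewrite -size_poly_gt0; case: (size d) => [|[|s]] //= _ _.
lia.
Qed.

Lemma irredp_dvdp_common_root (K L : fieldType) (f : {rmorphism K -> L})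
    (x : L) (q r : {poly K}) :
  irreducible_poly q -> root (map_poly f q) x -> root (map_poly f r) x ->
  q %| r.
Proof.
move=> irr_q qx rx; have q_neq0 := irredp_neq0 irr_q.
have gx : root (map_poly f (gcdp q r)) x by rewrite gcdp_map root_gcd qx.
have g_neq0 : gcdp q r != 0 by rewrite gcdp_eq0 negb_and q_neq0.
have g_gt1 : (1 < size (gcdp q r))%N.
  by rewrite -(size_map_poly f); apply: root_size_gt1 gx; rewrite map_poly_eq0.
have g_neq1 : size (gcdp q r) != 1%N by rewrite gtn_eqF.
have /eqp_dvdl <- := irr_q _ g_neq1 (dvdp_gcdl q r).
exact: dvdp_gcdr.
Qed.

Lemma irredp_Phi_pp (p n : nat) : prime p -> irreducible_poly (Phi_pp p n).
Proof.
move=> p_pr; have p_gt0 := prime_gt0 p_pr.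
have [c prim_c] : {c : algC | (p ^ n.+1).-primitive_root c}.
  by apply: C_prim_root_exists; rewrite expn_gt0 p_gt0.
have [pf [Dpf _] min_pf] := minCpolyP c.
have irr_pf : irreducible_poly pf.
  apply: (@min_root_irredp _ _ ratr c) => //.
  by rewrite -(size_map_poly (@ratr algC)) -Dpf size_minCpoly.
have pf_dvd : pf %| Phi_pp p n.
  rewrite -min_pf; apply: root_Phi_pp.
    by rewrite -(prim_order_dvd prim_c) dvdn_Pexp2l ?ltnn // prime_gt1.
  by rewrite -exprM -expnSr prim_expr_order.
have size_pf : size pf = (p.-1 * p ^ n).+1.
  rewrite -(size_map_poly (@ratr algC)) -Dpf (minCpoly_cyclotomic prim_c).
  by rewrite size_cyclotomic totient_pfactor.
have pf_Phi : pf %= Phi_pp p n by rewrite -dvdp_size_eqp // size_Phi_pp // size_pf.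
split=> [|q q_neq1 q_dvd].
  by rewrite -(eqp_size pf_Phi) size_pf ltnS muln_gt0 expn_gt0 p_gt0 -ltnS prednK ?prime_gt1.
have q_dvd_pf : q %| pf by rewrite (eqp_dvdr _ pf_Phi).
exact: eqp_trans (irr_pf q q_neq1 q_dvd_pf) pf_Phi.
Qed.

Lemma coef_mul_Phi_pp (p n : nat) (Q : {poly rat}) (b j : nat) :
  (size Q <= p ^ n)%N -> (b < p ^ n)%N -> (j < p)%N ->
  (Q * Phi_pp p n)`_(b + j * p ^ n)%N = Q`_b.
Proof.
set N := (p ^ n)%N => size_Q b_lt j_lt.
rewrite /Phi_pp mulr_sumr coef_sum (bigD1 (Ordinal j_lt)) //= coefMXn.
rewrite ltnNge leq_addl addnK big1 ?addr0 // => i neq_ij; rewrite coefMXn.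
have [//|ge_iN] := ltnP; apply: nth_default; apply: leq_trans size_Q _.
move: neq_ij; rewrite -val_eqE /= neq_ltn => /orP[lt_ij|lt_ji].
- have : (i.+1 * N <= j * N)%N by rewrite leq_mul2r lt_ij orbT.
  rewrite mulSn; lia.
- have : (j.+1 * N <= i * N)%N by rewrite leq_mul2r lt_ji orbT.
  rewrite mulSn; lia.
Qed.

Lemma coef_periodic_dvd_Phi_pp (p n : nat) (P : {poly rat}) (b j : nat) :
  (0 < p)%N -> (size P <= p ^ n.+1)%N -> Phi_pp p n %| P ->
  (b < p ^ n)%N -> (j < p)%N -> P`_(b + j * p ^ n)%N = P`_b.
Proof.
move=> p_gt0 size_P /dvdpP[Q def_P] b_lt j_lt; subst P.
have [-> | Q_neq0] := eqVneq Q 0; first by rewrite mul0r !coef0.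
have size_Q : (size Q <= p ^ n)%N.
  have Phi_neq0 : Phi_pp p n != 0 by rewrite -size_poly_gt0 size_Phi_pp.
  move: size_P; rewrite size_mul // size_Phi_pp // expnS.
  by rewrite -[X in (_ <= X * _)%N](prednK p_gt0) mulSn addnS /= leq_add2r.
by rewrite coef_mul_Phi_pp // -(@coef_mul_Phi_pp p n Q b 0 size_Q b_lt p_gt0) mul0n addn0.
Qed.

Lemma coef_sumXn (m : nat) (c : 'I_m -> nat) (k : nat) :
  ((\sum_(i < m) 'X^(c i) : {poly rat})`_k != 0) = [exists i, c i == k].
Proof.
rewrite coef_sum psumr_eq0 => [|i _]; last by rewrite coefXn ler0n.
rewrite -has_predC; apply/hasP/existsP => [[i _]|[i cik]].
  by rewrite /= coefXn pnatr_eq0 eqb0 negbK eq_sym; exists i.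
by exists i; rewrite ?mem_index_enum //= coefXn (eqP cik) eqxx oner_neq0.
Qed.

Lemma Phi_pp_ndvd_sumXn (p n m : nat) (c : 'I_m -> nat) :
  (1 < p)%N -> (0 < m)%N -> (forall i, c i < p ^ n.+1)%N ->
  injective (fun i => c i %% p ^ n)%N ->
  ~~ (Phi_pp p n %| \sum_(i < m) 'X^(c i)).
Proof.
move=> p_gt1 m_gt0 c_lt c_inj; apply/negP => Phi_dvd.
set N := (p ^ n)%N in c_inj.
have N_gt0 : (0 < N)%N by rewrite expn_gt0 ltnW.
have size_sum : (size (\sum_(i < m) 'X^(c i) : {poly rat})%R <= p ^ n.+1)%N.
  by apply: leq_trans (size_sum _ _ _) _; apply/bigmax_leqP => i _; rewrite size_polyXn.
have periodic b j := @coef_periodic_dvd_Phi_pp p n _ b j (ltnW p_gt1) size_sum Phi_dvd.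
pose i0 := Ordinal m_gt0; pose b := (c i0 %% N)%N; pose j0 := (c i0 %/ N)%N.
have b_lt : (b < N)%N by rewrite ltn_mod.
have j0_lt : (j0 < p)%N by rewrite ltn_divLR // -expnS.
pose j1 := (j0 == 0%N : nat).
have j1_lt : (j1 < p)%N by apply: leq_ltn_trans p_gt1; apply: leq_b1.
have /existsP[i /eqP ci] : [exists i, c i == b + j1 * N]%N.
  rewrite -coef_sumXn periodic // -(periodic b j0) // addnC -divn_eq coef_sumXn.
  by apply/existsP; exists i0.
have /c_inj ii0 : (c i %% N = c i0 %% N)%N by rewrite ci addnC modnMDl modn_small.
move: ci; rewrite ii0 (divn_eq (c i0) N) addnC -/b -/j0 => /eqP.
by rewrite eqn_add2l eqn_pmul2r // /j1; case: (j0).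
Qed.

Lemma sum_pow_root_unity_neq0 (F : numFieldType) (p n m : nat) (z : F)
    (c : 'I_m -> nat) :
  prime p -> z ^+ (p ^ n)%N != 1 -> (z ^+ (p ^ n)%N) ^+ p = 1 ->
  (0 < m)%N -> (forall i, c i < p ^ n.+1)%N ->
  injective (fun i => c i %% p ^ n)%N ->
  \sum_(i < m) z ^+ c i != 0.
Proof.
move=> p_pr zN_neq1 zNp_eq1 m_gt0 c_lt c_inj; apply/negP => /eqP sum_eq0.
case/negP: (Phi_pp_ndvd_sumXn (prime_gt1 p_pr) m_gt0 c_lt c_inj).
apply: (irredp_dvdp_common_root (irredp_Phi_pp n p_pr) (root_Phi_pp zN_neq1 zNp_eq1)).
rewrite /root rmorph_sum horner_sum (eq_bigr (fun i => z ^+ c i)) ?sum_eq0 // => i _.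
by rewrite rmorphXn /= map_polyX hornerXn.
Qed.

Lemma eqn_mod_coprime_cancelr (d w a b : nat) : coprime d w ->
  (a * w = b * w %[mod d])%N -> (a = b %[mod d])%N.
Proof.
move=> co_dw; wlog le_ba : a b / (b <= a)%N => [hwlog|].
  by case: (leqP b a) => [/hwlog//|/ltnW le_ab /esym/(hwlog _ _ le_ab)].
move/eqP; rewrite eqn_mod_dvd ?leq_mul2r ?le_ba ?orbT // -mulnBl Gauss_dvdl //.
by rewrite -eqn_mod_dvd // => /eqP.
Qed.

Section Zp_adic_theory.
Variable p : nat.
Implicit Types x y u : Zp_adic p.

Lemma zres_mod x e k : (e <= k)%N -> (x k %% p ^ e)%N = x e.
Proof.
elim: k => [|k IHk]; first by rewrite leqn0 => /eqP ->; rewrite modn_small ?zres_lt.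
rewrite leq_eqVlt => /predU1P[-> | le_ek]; first by rewrite modn_small ?zres_lt.
by rewrite -(IHk le_ek) -(zres_coh x k) modn_dvdm // dvdn_exp2l.
Qed.

Lemma zres0 x : x 0 = 0%N.
Proof. by apply/eqP; rewrite -leqn0 -ltnS -(expn0 p) zres_lt. Qed.

Lemma Zp_adic_ext x y : (forall n, x n = y n) -> x = y.
Proof.
case: x y => f f_lt f_coh [g g_lt g_coh] /= /funext eq_fg; subst g.
by congr MkZp; apply: Prop_irrelevance.
Qed.

Lemma zsub_eq0 x y n : zsub x y n = 0%N -> x n = y n.
Proof.
have := zres_lt x n; have := zres_lt y n; rewrite /=.
case: (leqP (y n) (x n)) => le_yx ylt xlt.
  have -> : (x n + (p ^ n - y n) = x n - y n + p ^ n)%N by lia.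
  by rewrite modnDr modn_small; lia.
rewrite modn_small; lia.
Qed.

Lemma zvalP x : ~ zis0 x -> x (zval x).+1 != 0%N /\ x (zval x) = 0%N.
Proof.
move=> x_neq0; have [n xn_neq0] : exists n, x n.+1 != 0%N.
  apply: contra_notP x_neq0 => no_n [|n]; first exact: zres0.
  by apply/eqP/negPn/negP => xn_neq0; apply: no_n; exists n.
rewrite /zval; case: pselect => [ex|]; last by move=> []; exists n.
case: ex_minnP => v xv_neq0 v_min; split=> //; case: v xv_neq0 v_min => [|v] xv_neq0 v_min.
  exact: zres0.
by apply/eqP; apply: contraT => /v_min; rewrite ltnn.
Qed.

Lemma zres_zval_zsub_neq x y : x <> y -> x (zval (zsub x y)).+1 != y (zval (zsub x y)).+1.
Proof.
move=> neq_xy; have [] := zvalP (x := zsub x y).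
  by apply: contra_not neq_xy => xy_eq0; apply: Zp_adic_ext => n; apply: zsub_eq0.
set e := zval _ => + _; apply: contra => /eqP /= ->.
by rewrite subnKC ?modnn // ltnW ?zres_lt.
Qed.

Lemma zres_zval_factor u n : ~ zis0 u -> (zval u < n)%N ->
  exists2 w, u n = (p ^ zval u * w)%N & ~~ (p %| w)%N.
Proof.
move=> u_neq0 lt_vn; have [uv1_neq0 uv_eq0] := zvalP u_neq0.
have /dvdnP[w def_un] : (p ^ zval u %| u n)%N by rewrite /dvdn zres_mod 1?ltnW ?uv_eq0.
exists w; first by rewrite mulnC.
apply: contra uv1_neq0 => /dvdnP[w' def_w].
by rewrite -(zres_mod u lt_vn) def_un def_w -mulnA -expnS modnMl.
Qed.

Lemma zmul_zres_neq x y u n : prime p -> x <> y -> ~ zis0 u ->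
  (zval (zsub x y) + zval u < n)%N -> zmul x u n != zmul y u n.
Proof.
move=> p_pr neq_xy u_neq0 lt_n.
set e := zval (zsub x y) in lt_n; set v := zval u in lt_n.
have [w def_un p_ndvd_w] := zres_zval_factor u_neq0 (leq_ltn_trans (leq_addl e v) lt_n).
have le_e1n : (e.+1 <= n)%N by lia.
have dvd_n : (p ^ (e.+1 + v) %| p ^ n)%N by rewrite dvdn_exp2l.
apply: contra (zres_zval_zsub_neq neq_xy) => /eqP /= eq_mod.
rewrite -!(zres_mod _ le_e1n); apply/eqP.
apply: (@eqn_mod_coprime_cancelr _ w); first by rewrite coprimeXl // prime_coprime.
apply/eqP; rewrite -(@eqn_pmul2r (p ^ v)) ?expn_gt0 ?prime_gt0 // !muln_modl -expnD.
rewrite -!mulnA [(w * _)%N]mulnC -def_un.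
by rewrite -(modn_dvdm (x n * _) dvd_n) -(modn_dvdm (y n * _) dvd_n) eq_mod.
Qed.
End Zp_adic_theory.

Section Expi.
Variable R : realType.

Lemma expi0 : expi (0 : R) = 1.
Proof. by rewrite /expi cos0 sin0. Qed.

Lemma expiD (x y : R) : expi (x + y) = expi x * expi y.
Proof. by rewrite /expi cosD sinD; apply/eqP; rewrite eq_complex /= eqxx addrC eqxx. Qed.

Lemma expiMn (x : R) k : expi (x *+ k) = expi x ^+ k.
Proof. by elim: k => [|k IHk]; rewrite ?mulr0n ?expi0 // mulrS expiD IHk exprS. Qed.

Lemma expi_frac (a d : nat) :
  expi (- (2 * pi * (a%:R / d%:R)) : R) = expi (- (2 * pi / d%:R)) ^+ a.
Proof. by rewrite -expiMn mulNrn -(mulr_natr (2 * pi / d%:R)); congr (expi (- _)); ring. Qed.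

Lemma expi_pexp_frac (p n : nat) : (0 < p)%N ->
  expi (- (2 * pi / (p ^ n.+1)%:R) : R) ^+ (p ^ n) = expi (- (2 * pi / p%:R)).
Proof.
move=> p_gt0; rewrite -expi_frac; congr (expi (- (2 * pi * _))).
by rewrite expnS natrM invfM mulrCA mulfV ?mulr1 // pnatr_eq0 -lt0n expn_gt0 p_gt0.
Qed.

Lemma expi_root_unity (d : nat) : (0 < d)%N ->
  expi (- (2 * pi / d%:R) : R) ^+ d = 1.
Proof.
move=> d_gt0; rewrite -expi_frac mulfV ?pnatr_eq0 -?lt0n // mulr1.
by rewrite /expi cosN sinN mulr_natl cos2pi sin2pi oppr0.
Qed.

Lemma expi_root_unity_neq1 (d : nat) : (1 < d)%N ->
  expi (- (2 * pi / d%:R) : R) != 1.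
Proof.
move=> d_gt1; rewrite /expi cosN sinN eq_complex /= negb_and oppr_eq0.
have d_gt0 : (0 : R) < d%:R by rewrite ltr0n ltnW.
have [d_eq2 | d_neq2] := eqVneq d 2.
  apply/orP; left; rewrite d_eq2 [2 * pi]mulrC mulfK ?pnatr_eq0 // cospi.
  by apply/eqP; lra.
apply/orP; right; apply: lt0r_neq0; apply: sin_gt0_pi; apply/andP; split.
  by rewrite divr_gt0 // mulr_gt0 // pi_gt0.
rewrite ltr_pdivrMr // [pi * _]mulrC ltr_pM2r ?pi_gt0 // ltr_nat.
by rewrite ltn_neqAle eq_sym d_neq2 d_gt1.
Qed.

Lemma muT_hat_MkQp (p m : nat) (t : 'I_m -> Zp_adic p) (k : nat) (u : Zp_adic p) :
  muT_hat R t (MkQp k u) = \sum_(i < m) expi (- (2 * pi / (p ^ k)%:R)) ^+ zmul (t i) u k.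
Proof. by apply: eq_bigr => i _; rewrite -expi_frac. Qed.
End Expi.

Lemma zval_le_gammaT (p m : nat) (t : 'I_m -> Zp_adic p) (i j : 'I_m) :
  i != j -> (zval (zsub (t i) (t j)) <= gammaT t)%N.
Proof.
move=> neq_ij; apply: leq_trans (leq_bigmax i).
exact: (leq_bigmax_cond (F := fun j => zval (zsub (t i) (t j))) j neq_ij).
Qed.

Theorem lemma2p5 (R : realType) (p : nat) (hp : prime p)
  (m : nat) (hm : (2 <= m)%N) (t : 'I_m -> Zp_adic p) (ht : injective t)
  (xi : Qp_adic p) :
  (p%:R : R) ^ ((gammaT t)%:Z + 1) < qabs R xi ->
  muT_hat R t xi != 0.
Proof.
case: xi => k u; rewrite /qabs /=; case: asboolP => [_ | u_neq0].
  by rewrite ltNge exprz_ge0 ?ler0n.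
have p_gt1 := prime_gt1 hp.
rewrite ltr_eXz2l ?ltr1n // => lt_gamma_k.
have [n def_k] : exists n, k = n.+1 by exists k.-1; lia.
have lt_val_n : (gammaT t + zval u < n)%N by lia.
rewrite def_k muT_hat_MkQp; apply: (@sum_pow_root_unity_neq0 _ p n) => //.
- by rewrite expi_pexp_frac ?expi_root_unity_neq1 // ltnW.
- by rewrite expi_pexp_frac ?expi_root_unity // ltnW.
- exact: ltnW.
- by move=> i; apply: zres_lt.
move=> i j; rewrite !(zres_mod (zmul _ u)) //; apply: contra_eq => neq_ij.
apply: zmul_zres_neq => //; first by move/ht/eqP; rewrite (negbTE neq_ij).
by apply: leq_ltn_trans lt_val_n; rewrite leq_add2r zval_le_gammaT.
Qed.
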